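(* Let $k\ge3$ and let $\Gamma=(X,E)$ be a finite set-homogeneous $k$-hypergraph. Then $\mathrm{Aut}(\Gamma)$ acts 2-transitively on $X$.
   Context: A $k$-hypergraph is a pair $(X,E)$ with $E$ a set of $k$-element subsets of $X$ (edges). It is set-homogeneous if for every $t\ge1$, whenever $U,V\subseteq X$ with $|U|=|V|=t$ carry isomorphic induced subhypergraphs there is $g\in\mathrm{Aut}(\Gamma)$ with $U^g=V$. 2-transitive means transitive on ordered pairs of distinct points. *)

From mathcomp Require Import all_boot all_fingroup.
Set Implicit Arguments. Unset Strict Implicit. Unset Printing Implicit Defensive.

Definition is_khypergraph (T : finType) (k : nat) (E : {set {set T}}) : Prop :=
  forall e, e \in E -> #|e| = k.

Definition is_aut (T : finType) (E : {set {set T}}) (g : {perm T}) : Prop :=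
  forall A : {set T}, (A \in E) = ((g @: A) \in E).

Definition induced_iso (T : finType) (E : {set {set T}}) (U V : {set T}) : Prop :=
  exists f : T -> T,
    [/\ {in U &, injective f}, f @: U = V &
        forall A : {set T}, A \subset U -> (A \in E) = ((f @: A) \in E)].

Definition set_homogeneous (T : finType) (E : {set {set T}}) : Prop :=
  forall (t : nat) (U V : {set T}), 1 <= t -> #|U| = t -> #|V| = t ->
    induced_iso E U V ->
    exists g : {perm T}, is_aut E g /\ g @: U = V.

Definition aut_2transitive (T : finType) (E : {set {set T}}) : Prop :=
  forall x y x' y' : T, x != y -> x' != y' ->
    exists g : {perm T}, [/\ is_aut E g, g x = x' & g y = y'].

From mathcomp Require Import all_boot all_fingroup zify.
Set Implicit Arguments. Unset Strict Implicit. Unset Printing Implicit Defensive.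

(* Sets of fewer than k points carry no edges, so set-homogeneity makes Aut(Γ)
   transitive on points and on 2-sets.  If some pair {p, q} cannot be swapped, the
   Aut-orbit of (p, q) is an Aut-invariant tournament, vertex-transitive and hence
   regular.  When |X| <= k every permutation is an automorphism, so |X| > k and the
   tournament contains both a transitive and a cyclic triangle.  These must differ
   in edge status (else an automorphism maps one onto the other), which forces k = 3
   and makes the edge status of a triple depend only on whether it has a source.
   Now p with a cyclic triangle of out-neighbours and p with a cyclic triangle of
   in-neighbours induce isomorphic hypergraphs (every triple through p has a source,
   the triangle has none), yet only the first has a source. *)

Section SetMaps.

Variable T : finType.

Lemma imset_permT (g : {perm T}) : g @: [set: T] = [set: T].
Proof. by apply/eqP; rewrite eqEcard subsetT (card_imset _ perm_inj) leqnn. Qed.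

Lemma mem_imset_in (f : T -> T) (D A : {set T}) x :
  {in D &, injective f} -> A \subset D -> x \in D -> (f x \in f @: A) = (x \in A).
Proof.
move=> f_inj AD xD; apply/imsetP/idP => [[z zA /f_inj fzx]|]; last by exists x.
by rewrite fzx // (subsetP AD).
Qed.

Lemma perm_imset_set2 (g : {perm T}) x y x' y' : x != y ->
  g @: [set x; y] = [set x'; y'] -> (g x = x' /\ g y = y') \/ (g x = y' /\ g y = x').
Proof.
move=> neq_xy gxy.
have gx : g x \in [set x'; y'] by rewrite -gxy imset_f // !inE eqxx.
have gy : g y \in [set x'; y'] by rewrite -gxy imset_f // !inE eqxx orbT.
have : g x != g y by rewrite (inj_eq perm_inj).
by move: gx gy; rewrite !inE => /orP [] /eqP -> /orP [] /eqP ->; rewrite ?eqxx; auto.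
Qed.

(* The bijection enumerates [A] onto [B] in order, and sends every point outside [A]
   to the default [x0], as [index] then falls off the end of [enum A]. *)
Lemma card_eq_bij (x0 : T) (A B : {set T}) : #|A| = #|B| ->
  exists f : T -> T,
    [/\ {in A &, injective f}, f @: A = B & forall z, z \notin A -> f z = x0].
Proof.
move=> AB; pose f z := nth x0 (enum B) (index z (enum A)).
have sizeAB : size (enum A) = size (enum B) by rewrite -!cardE.
have f_inj : {in A &, injective f}.
  move=> z1 z2 z1A z2A /eqP; rewrite /f nth_uniq ?enum_uniq // -?sizeAB ?index_mem ?mem_enum //.
  by move/eqP/(congr1 (nth x0 (enum A))); rewrite !nth_index ?mem_enum.
exists f; split=> // [|z zA]; last by rewrite /f nth_default // memNindex ?mem_enum // sizeAB.
apply/eqP; rewrite eqEcard card_in_imset // AB leqnn andbT.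
by apply/subsetP => _ /imsetP [z zA ->]; rewrite -mem_enum mem_nth // -sizeAB index_mem mem_enum.
Qed.

Lemma card_eq_bij_setU1 (x : T) (A B : {set T}) : #|A| = #|B| -> x \notin A -> x \notin B ->
  exists f : T -> T,
    [/\ {in x |: A &, injective f}, f @: (x |: A) = x |: B, f x = x & f @: A = B].
Proof.
move=> AB xA xB; have [f [f_inj fA fout]] := card_eq_bij x AB.
have fx := fout x xA; exists f; split=> //; last by rewrite imsetU1 fx fA.
have fAB z : z \in A -> f z \in B by move=> zA; rewrite -fA imset_f.
move=> z1 z2; rewrite !inE => /predU1P [-> | z1A] /predU1P [-> | z2A] //.
- by move=> fxz; move: xB; rewrite -fx fxz fAB.
- by move=> fzx; move: xB; rewrite -fx -fzx fAB.
- exact: f_inj.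
Qed.

End SetMaps.

Section Tournament.

Variables (T : finType) (R : rel T).

Definition out_nbhd (S : {set T}) u := [set v in S | R u v].
Definition in_nbhd (S : {set T}) u := [set v in S | R v u].

Definition vertex_transitive (S : {set T}) :=
  {in S &, forall y y', exists2 h : {perm T}, {mono h : u v / R u v} & h @: S = S /\ h y = y'}.

Definition has_source (A : {set T}) := [exists u in A, [forall v in A, (v != u) ==> R u v]].

Lemma out_nbhd_perm (h : {perm T}) (S : {set T}) u : {mono h : x y / R x y} ->
  out_nbhd (h @: S) (h u) = h @: out_nbhd S u.
Proof.
by move=> hR; apply/setP => v; rewrite -[v](permKV h) !inE !(mem_imset _ _ perm_inj) inE hR.
Qed.

Lemma in_nbhd_perm (h : {perm T}) (S : {set T}) u : {mono h : x y / R x y} ->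
  in_nbhd (h @: S) (h u) = h @: in_nbhd S u.
Proof.
by move=> hR; apply/setP => v; rewrite -[v](permKV h) !inE !(mem_imset _ _ perm_inj) inE hR.
Qed.

Lemma card_out_nbhd_const (S : {set T}) : vertex_transitive S ->
  {in S &, forall y y', #|out_nbhd S y| = #|out_nbhd S y'|}.
Proof.
move=> trS y y' yS y'S; have [h hR [hS <-]] := trS y y' yS y'S.
by rewrite -[in RHS]hS out_nbhd_perm // (card_imset _ perm_inj).
Qed.

Lemma card_in_nbhd_const (S : {set T}) : vertex_transitive S ->
  {in S &, forall y y', #|in_nbhd S y| = #|in_nbhd S y'|}.
Proof.
move=> trS y y' yS y'S; have [h hR [hS <-]] := trS y y' yS y'S.
by rewrite -[in RHS]hS in_nbhd_perm // (card_imset _ perm_inj).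
Qed.

Lemma vertex_transitive_regular u : vertex_transitive [set: T] ->
  #|out_nbhd [set: T] u| = #|in_nbhd [set: T] u|.
Proof.
move=> trT; pose outdeg v := #|out_nbhd [set: T] v|; pose indeg v := #|in_nbhd [set: T] v|.
have outdegE v : outdeg v = \sum_w (R v w : nat).
  by rewrite /outdeg -sum1_card big_mkcond; apply: eq_bigr => w _; rewrite !inE; case: (R v w).
have indegE w : indeg w = \sum_v (R v w : nat).
  by rewrite /indeg -sum1_card big_mkcond; apply: eq_bigr => v _; rewrite !inE; case: (R v w).
have double_count : \sum_v outdeg v = \sum_v indeg v.
  under eq_bigr do rewrite outdegE; under [RHS]eq_bigr do rewrite indegE; exact: exchange_big.
move: double_count.
rewrite (eq_bigr (fun=> outdeg u)) => [|v _]; last by apply: card_out_nbhd_const; rewrite ?inE.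
rewrite [RHS](eq_bigr (fun=> indeg u)) => [|v _]; last by apply: card_in_nbhd_const; rewrite ?inE.
rewrite !sum_nat_const => /eqP; rewrite eqn_pmul2l => [/eqP //|].
by apply/card_gt0P; exists u.
Qed.

Hypothesis R_asym : forall u v, R u v -> ~~ R v u.
Hypothesis R_total : forall u v, u != v -> R u v || R v u.

Lemma asym_irrefl u : R u u = false.
Proof. by apply/negP => Ruu; move/negP: (R_asym Ruu). Qed.

Lemma asym_neq u v : R u v -> u != v.
Proof. by apply: contraTneq => ->; rewrite asym_irrefl. Qed.

Lemma card_out_in_nbhd u : #|T| = (#|out_nbhd [set: T] u| + #|in_nbhd [set: T] u|).+1.
Proof.
have cover : [set: T] :\ u = out_nbhd [set: T] u :|: in_nbhd [set: T] u.
  apply/setP => v; rewrite !inE /=; have [->|neq_vu] := eqVneq v u; first by rewrite asym_irrefl.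
  by rewrite orbC R_total.
have disjoint : out_nbhd [set: T] u :&: in_nbhd [set: T] u = set0.
  by apply/setP => v; rewrite !inE /=; apply/negbTE/andP => -[/R_asym/negP].
by rewrite -addn1 -cardsUI -cover disjoint cards0 addn0 -cardsT (cardsD1 u) inE addnC.
Qed.

Lemma has_sourceP (A : {set T}) :
  reflect (exists2 u, u \in A & {in A, forall v, v != u -> R u v}) (has_source A).
Proof.
apply: (iffP exists_inP) => -[u uA src]; exists u => //.
  by move=> v vA; apply/implyP; move/forall_inP: src; apply.
by apply/forall_inP => v vA; apply/implyP; apply: src.
Qed.

Lemma has_sourceNP (A : {set T}) :
  reflect {in A, forall u, exists2 w, w \in A & R w u} (~~ has_source A).
Proof.
apply: (iffP idP) => [noA u uA | pred_in].
  apply/exists_inP; apply: contraNT noA; rewrite negb_exists_in => /forall_inP no_pred.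
  apply/has_sourceP; exists u => // v vA neq_vu.
  by move: (R_total neq_vu) (no_pred v vA); case: (R v u); rewrite ?orbF.
apply/has_sourceP => -[u uA src]; have [w wA Rwu] := pred_in u uA.
by move/negP: (R_asym Rwu); apply; apply: src (asym_neq Rwu).
Qed.

Lemma has_source_imset (h : T -> T) (A : {set T}) :
  {homo h : u v / R u v} -> has_source A -> has_source (h @: A).
Proof.
move=> hR /has_sourceP [u uA src]; apply/has_sourceP; exists (h u); first exact: imset_f.
by move=> _ /imsetP [v vA ->] neq; apply/hR/src => //; apply: contraNneq neq => ->.
Qed.

(* If [x -> y] lies on no directed triangle, then [y] beats [x] and every in-neighbour
   of [x], so [y] has strictly larger in-degree than [x]. *)
Lemma exists_cyclic_triangle (S : {set T}) : vertex_transitive S -> 1 < #|S| ->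
  exists C : {set T}, [/\ C \subset S, #|C| = 3 & ~~ has_source C].
Proof.
move=> /card_in_nbhd_const in_const /card_gt1P [u [v [uS vS neq_uv]]].
have [x [y [xS yS Rxy]]] : exists x y, [/\ x \in S, y \in S & R x y].
  by case/orP: (R_total neq_uv) => ?; [exists u, v | exists v, u].
case: (boolP [exists z in S, R y z && R z x]) => [/exists_inP [z zS /andP [Ryz Rzx]] | no_z].
  exists (x |: [set y; z]); split.
  - by apply/subsetP => w; rewrite !inE => /or3P [] /eqP ->.
  - rewrite cardsU1 cards2 asym_neq // !inE negb_or asym_neq // eq_sym asym_neq //.
  apply/has_sourceNP => w; rewrite !inE => /or3P [] /eqP ->.
  - by exists z; rewrite ?inE ?eqxx ?orbT.
  - by exists x; rewrite ?inE ?eqxx.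
  - by exists y; rewrite ?inE ?eqxx ?orbT.
have sub : x |: in_nbhd S x \subset in_nbhd S y.
  apply/subsetP => z; rewrite !inE => /predU1P [-> | /andP [zS Rzx]]; first by rewrite xS.
  have neq_zy : z != y by apply: contraTneq Rzx => ->; exact: R_asym.
  case/orP: (R_total neq_zy) => [-> | Ryz]; first by rewrite zS.
  by case/negP: no_z; apply/exists_inP; exists z; rewrite ?Ryz.
move: (subset_leq_card sub); rewrite cardsU1 (in_const y x) // !inE asym_irrefl andbF.
by rewrite ltnn.
Qed.

Lemma has_source_of_sink (A : {set T}) x : #|A| = 3 -> x \in A ->
  {in A, forall v, v != x -> R v x} -> has_source A.
Proof.
move=> A3 xA sink.
have /cards2P [u [v [neq_uv Ax]]] : #|A :\ x| == 2.
  by move: A3; rewrite (cardsD1 x) xA add1n => -[->].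
have memA w : (w \in A) = (w == x) || (w \in [set u; v]).
  by rewrite -Ax !inE; case: eqVneq => [->|].
wlog Ruv : u v neq_uv Ax memA / R u v.
  move=> base; case/orP: (R_total neq_uv); first exact: base.
  by apply: base; rewrite 1?eq_sym // setUC.
have [ux uA] : u != x /\ u \in A by move: (set21 u v); rewrite -Ax !inE => /andP.
apply/has_sourceP; exists u => // w; rewrite memA !inE => /or3P [] /eqP -> //.
- by move=> _; apply: sink.
- by rewrite eqxx.
Qed.

Lemma has_source_setU1 (C A : {set T}) x : #|C| = 3 -> ~~ has_source C -> x \notin C ->
  {in C, forall c, R x c} \/ {in C, forall c, R c x} ->
  A \subset x |: C -> #|A| = 3 -> has_source A = (x \in A).
Proof.
move=> C3 noC xC x_dir AxC A3.
have inC v : v \in A -> v != x -> v \in C.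
  by move=> /(subsetP AxC); rewrite !inE => /predU1P [->|]; rewrite ?eqxx.
apply/idP/idP => [srcA | xA].
  apply: contraLR srcA => xA; suff -> : A = C by [].
  apply/eqP; rewrite eqEcard C3 A3 leqnn andbT; apply/subsetP => v vA.
  by apply: (inC _ vA); apply: contraNneq xA => <-.
case: x_dir => [src | sink].
  by apply/has_sourceP; exists x => // v vA vx; apply/src/inC.
by apply: (has_source_of_sink A3 xA) => v vA vx; apply/sink/inC.
Qed.

End Tournament.

Section Orbital.

Variables (T : finType) (G : {group {perm T}}) (p q : T).

Definition orbital u v := [exists g in G, (g p == u) && (g q == v)].

Lemma orbitalP u v : reflect (exists2 g, g \in G & g p = u /\ g q = v) (orbital u v).
Proof.
apply: (iffP exists_inP) => [[g gG /andP [/eqP gp /eqP gq]] | [g gG [gp gq]]]; exists g => //.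
by rewrite gp gq !eqxx.
Qed.

Lemma orbital_mono h : h \in G -> {mono h : u v / orbital u v}.
Proof.
move=> hG u v; apply/orbitalP/orbitalP => -[g gG [gp gq]].
  by exists (g * h^-1)%g; rewrite ?groupM ?groupV // !permM gp gq !permK.
by exists (g * h)%g; rewrite ?groupM // !permM gp gq.
Qed.

Lemma orbital_arc x y x' y' : orbital x y -> orbital x' y' ->
  exists2 h, h \in G & h x = x' /\ h y = y'.
Proof.
move=> /orbitalP [g gG [<- <-]] /orbitalP [g' g'G [<- <-]].
by exists (g^-1 * g')%g; rewrite ?groupM ?groupV // !permM !permK.
Qed.

Lemma orbital_asym : ~~ orbital q p -> forall u v, orbital u v -> ~~ orbital v u.
Proof.
move=> no_swap u v /orbitalP [g gG [gp gq]]; apply: contra no_swap => /orbitalP [g' g'G [g'p g'q]].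
by apply/orbitalP; exists (g' * g^-1)%g; rewrite ?groupM ?groupV // !permM g'p g'q -gp -gq !permK.
Qed.

Lemma orbital_total : p != q ->
  (forall u v, u != v -> exists2 g, g \in G & g @: [set p; q] = [set u; v]) ->
  forall u v, u != v -> orbital u v || orbital v u.
Proof.
move=> neq_pq pairs_trans u v neq_uv; have [g gG gpq] := pairs_trans u v neq_uv.
case: (perm_imset_set2 neq_pq gpq) => -[gp gq]; apply/orP; [left | right];
  by apply/orbitalP; exists g.
Qed.

Lemma orbital_vertex_transitive_out :
  vertex_transitive orbital (out_nbhd orbital [set: T] p).
Proof.
move=> y y'; rewrite !inE => Rpy Rpy'; have [h hG [hp hy]] := orbital_arc Rpy Rpy'.
exists h; first exact: orbital_mono.
by rewrite -out_nbhd_perm ?imset_permT ?hp; last exact: orbital_mono.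
Qed.

Lemma orbital_vertex_transitive_in :
  vertex_transitive orbital (in_nbhd orbital [set: T] p).
Proof.
move=> y y'; rewrite !inE => Ryp Ry'p; have [h hG [hy hp]] := orbital_arc Ryp Ry'p.
exists h; first exact: orbital_mono.
by rewrite -in_nbhd_perm ?imset_permT ?hp; last exact: orbital_mono.
Qed.

End Orbital.

Section HypergraphAutomorphisms.

Variables (T : finType) (k : nat) (E : {set {set T}}).
Hypothesis k_ge3 : 3 <= k.
Hypothesis E_uniform : is_khypergraph k E.
Hypothesis E_homogeneous : set_homogeneous E.

(* Aut(Γ) as the setwise stabiliser of [E] for the action of permutations on subsets,
   which makes it a group for free. *)
Local Notation Aut := 'N(E | 'P^*)%g.

Lemma is_autP (g : {perm T}) : reflect (is_aut E g) (g \in Aut).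
Proof. by apply: (iffP astabsP) => autg A; [rewrite -autg | rewrite [RHS]autg]. Qed.

Lemma aut_of_iso (U V : {set T}) (f : T -> T) : 0 < #|U| ->
  {in U &, injective f} -> f @: U = V ->
  (forall A : {set T}, A \subset U -> #|A| = k -> (A \in E) = (f @: A \in E)) ->
  exists2 g, g \in Aut & g @: U = V.
Proof.
move=> U0 f_inj fU f_iso.
have card_fA (A : {set T}) : A \subset U -> #|f @: A| = #|A|.
  by move=> /subsetP AU; apply: card_in_imset; apply: sub_in2 f_inj.
have iso : induced_iso E U V.
  exists f; split=> // A AU; have [Ak | Ak] := eqVneq #|A| k; first exact: f_iso.
  by apply/idP/idP => /E_uniform; rewrite ?card_fA // => /eqP; rewrite (negbTE Ak).
have VU : #|V| = #|U| by rewrite -fU card_fA.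
have [g [/is_autP autg gU]] := E_homogeneous U0 erefl VU iso.
by exists g.
Qed.

Lemma aut_of_card (U V : {set T}) : #|U| = #|V| -> 0 < #|U| < k ->
  exists2 g, g \in Aut & g @: U = V.
Proof.
move=> UV /andP [U0 Uk]; have [x0 _] := card_gt0P U0.
have [f [f_inj fU _]] := card_eq_bij x0 UV.
apply: aut_of_iso U0 f_inj fU _ => A AU Ak.
by move: (subset_leq_card AU); rewrite Ak leqNgt Uk.
Qed.

Lemma aut_of_triples (A B : {set T}) : #|A| = 3 -> #|B| = 3 -> (A \in E) = (B \in E) ->
  exists2 g, g \in Aut & g @: A = B.
Proof.
move=> A3 B3 AB; have [x0 _] : exists x0, x0 \in A by apply/card_gt0P; rewrite A3.
have [f [f_inj fA _]] := card_eq_bij x0 (etrans A3 (esym B3)).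
apply: (aut_of_iso _ f_inj fA); first by rewrite A3.
move=> A' A'A A'k; suff -> : A' = A by rewrite fA.
by apply/eqP; rewrite eqEcard A'A A'k A3.
Qed.

Lemma aut_of_card_le (g : {perm T}) : #|T| <= k -> g \in Aut.
Proof.
move=> Tk; apply/is_autP => A; have [Ak | Ak] := eqVneq #|A| k.
  suff -> : A = [set: T] by rewrite imset_permT.
  by apply/eqP; rewrite eqEcard subsetT cardsT Ak.
apply/idP/idP => /E_uniform; rewrite ?(card_imset _ perm_inj) => /eqP; by rewrite (negbTE Ak).
Qed.

Lemma aut_vertex_transitive x x' : exists2 g, g \in Aut & g x = x'.
Proof.
have [g autg gx] : exists2 g, g \in Aut & g @: [set x] = [set x'].
  by apply: aut_of_card; rewrite !cards1 //= (leq_trans _ k_ge3).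
by exists g => //; apply/set1P; rewrite -gx imset_set1 set11.
Qed.

Lemma aut_pairs_transitive u v u' v' : u != v -> u' != v' ->
  exists2 g, g \in Aut & g @: [set u; v] = [set u'; v'].
Proof.
by move=> neq_uv neq_uv'; apply: aut_of_card; rewrite !cards2 ?neq_uv ?neq_uv'.
Qed.

Section NoSwap.

Variables p q : T.
Hypothesis neq_pq : p != q.
Hypothesis no_swap : ~~ orbital Aut p q q p.

Local Notation R := (orbital Aut p q).

Lemma orbital_aut_asym u v : R u v -> ~~ R v u.
Proof. exact: orbital_asym. Qed.

Lemma orbital_aut_total u v : u != v -> R u v || R v u.
Proof. by apply: orbital_total => // u' v'; apply: aut_pairs_transitive. Qed.

Lemma orbital_aut_homo (g : {perm T}) : g \in Aut -> {homo g : u v / R u v}.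
Proof. by move=> autg u v; rewrite orbital_mono. Qed.

Lemma k_lt_cardT : k < #|T|.
Proof.
rewrite ltnNge; apply: contra no_swap => Tk; apply/orbitalP.
by exists (tperm p q); rewrite ?aut_of_card_le ?tpermL ?tpermR.
Qed.

Lemma orbital_aut_vertex_transitive : vertex_transitive R [set: T].
Proof.
move=> y y' _ _; have [g autg gy] := aut_vertex_transitive y y'.
by exists g; rewrite ?imset_permT //; apply: orbital_mono.
Qed.

Lemma card_out_in_nbhd_gt1 :
  1 < #|out_nbhd R [set: T] p| /\ 1 < #|in_nbhd R [set: T] p|.
Proof.
have := k_lt_cardT; rewrite (card_out_in_nbhd orbital_aut_asym orbital_aut_total p).
by rewrite -(vertex_transitive_regular p orbital_aut_vertex_transitive); move: k_ge3; lia.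
Qed.

Lemma exists_source_triple : exists A : {set T}, #|A| = 3 /\ has_source R A.
Proof.
have [/card_gt1P [y [z [Rpy Rpz neq_yz]]] _] := card_out_in_nbhd_gt1.
rewrite !inE /= in Rpy Rpz; exists (p |: [set y; z]); split.
  by rewrite cardsU1 cards2 neq_yz !inE negb_or !(asym_neq orbital_aut_asym).
apply/has_sourceP; exists p; first exact: setU11.
by move=> v; rewrite !inE => /or3P [] /eqP -> //; rewrite eqxx.
Qed.

Lemma exists_cyclic_triple : exists B : {set T}, #|B| = 3 /\ ~~ has_source R B.
Proof.
have [|B [_ B3 noB]] :=
  exists_cyclic_triangle orbital_aut_asym orbital_aut_total orbital_aut_vertex_transitive.
  by rewrite cardsT (ltn_trans _ k_lt_cardT) // (leq_trans _ k_ge3).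
by exists B.
Qed.

Lemma triple_edge_neq (A B : {set T}) : #|A| = 3 -> #|B| = 3 ->
  has_source R A -> ~~ has_source R B -> (A \in E) != (B \in E).
Proof.
move=> A3 B3 srcA noB; apply/negP => /eqP AB; have [g autg gA] := aut_of_triples A3 B3 AB.
by move: (has_source_imset (orbital_aut_homo autg) srcA); rewrite gA (negbTE noB).
Qed.

Lemma k_eq3 : k = 3.
Proof.
have [A [A3 srcA]] := exists_source_triple; have [B [B3 noB]] := exists_cyclic_triple.
apply/eqP; apply: contraNT (triple_edge_neq A3 B3 srcA noB) => k3.
have notE (C : {set T}) : #|C| = 3 -> C \notin E.
  by move=> C3; apply: contra k3 => /E_uniform <-; rewrite C3.
by rewrite (negbTE (notE A A3)) (negbTE (notE B B3)).
Qed.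

Lemma triple_edge_by_source (A B : {set T}) : #|A| = 3 -> #|B| = 3 ->
  has_source R A = has_source R B -> (A \in E) = (B \in E).
Proof.
move=> A3 B3 AB; have [A0 [A0_3 srcA0]] := exists_source_triple.
have [B0 [B0_3 noB0]] := exists_cyclic_triple.
case: (boolP (has_source R A)) => [srcA | noA].
  have srcB : has_source R B by rewrite -AB.
  move: (triple_edge_neq A3 B0_3 srcA noB0) (triple_edge_neq B3 B0_3 srcB noB0).
  by case: (A \in E); case: (B \in E); case: (B0 \in E).
have noB : ~~ has_source R B by rewrite -AB.
move: (triple_edge_neq A0_3 A3 srcA0 noA) (triple_edge_neq A0_3 B3 srcA0 noB).
by case: (A \in E); case: (B \in E); case: (A0 \in E).
Qed.

(* Every triple of [p |: C1] or [p |: C2] through [p] has a source and the triangle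
   itself has none, so a bijection fixing [p] preserves the edges. *)
Lemma aut_of_dominating_triangles (C1 C2 : {set T}) :
  #|C1| = 3 -> #|C2| = 3 -> ~~ has_source R C1 -> ~~ has_source R C2 ->
  {in C1, forall c, R p c} -> {in C2, forall c, R c p} ->
  exists2 g, g \in Aut & g @: (p |: C1) = p |: C2.
Proof.
move=> C1_3 C2_3 noC1 noC2 RpC1 RC2p.
have pC1 : p \notin C1 by apply/negP => /RpC1; rewrite (asym_irrefl orbital_aut_asym).
have pC2 : p \notin C2 by apply/negP => /RC2p; rewrite (asym_irrefl orbital_aut_asym).
have [f [f_inj fU fp _]] := card_eq_bij_setU1 (etrans C1_3 (esym C2_3)) pC1 pC2.
apply: (aut_of_iso _ f_inj fU) => [|A AU]; first by rewrite cardsU1 pC1 C1_3.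
rewrite k_eq3 => A3.
have fA3 : #|f @: A| = 3 by rewrite card_in_imset //; apply: sub_in2 f_inj; exact/subsetP.
have fAV : f @: A \subset p |: C2 by rewrite -fU imsetS.
apply: triple_edge_by_source; rewrite //.
rewrite (has_source_setU1 orbital_aut_total C1_3 noC1 pC1 (or_introl RpC1) AU A3).
rewrite (has_source_setU1 orbital_aut_total C2_3 noC2 pC2 (or_intror RC2p) fAV fA3).
by rewrite -[in RHS]fp (mem_imset_in f_inj AU) ?setU11.
Qed.

Lemma no_swap_false : False.
Proof.
have [gt1_out gt1_in] := card_out_in_nbhd_gt1.
have [C1 [C1out C1_3 noC1]] :=
  exists_cyclic_triangle orbital_aut_asym orbital_aut_total
    (@orbital_vertex_transitive_out _ Aut p q) gt1_out.
have [C2 [C2in C2_3 noC2]] :=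
  exists_cyclic_triangle orbital_aut_asym orbital_aut_total
    (@orbital_vertex_transitive_in _ Aut p q) gt1_in.
have RpC1 : {in C1, forall c, R p c} by move=> c /(subsetP C1out); rewrite !inE.
have RC2p : {in C2, forall c, R c p} by move=> c /(subsetP C2in); rewrite !inE.
have [g autg gU] := aut_of_dominating_triangles C1_3 C2_3 noC1 noC2 RpC1 RC2p.
have srcU : has_source R (p |: C1).
  apply/has_sourceP; exists p; first exact: setU11.
  by move=> v /setU1P [-> | /RpC1 //]; rewrite eqxx.
have noV : ~~ has_source R (p |: C2).
  apply/(has_sourceNP orbital_aut_asym orbital_aut_total) => u /setU1P [-> | uC2].
    have [c cC2] : exists c, c \in C2 by apply/card_gt0P; rewrite C2_3.
    by exists c; rewrite ?setU1r ?RC2p.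
  have [w wC2 Rwu] := has_sourceNP orbital_aut_asym orbital_aut_total _ noC2 u uC2.
  by exists w; rewrite ?setU1r.
by move: (has_source_imset (orbital_aut_homo autg) srcU); rewrite gU (negbTE noV).
Qed.

End NoSwap.

Lemma aut_swap p q : p != q -> exists2 s, s \in Aut & s p = q /\ s q = p.
Proof.
move=> neq_pq; apply/orbitalP; apply: contraT => no_swap.
by case: (no_swap_false neq_pq no_swap).
Qed.

End HypergraphAutomorphisms.

Theorem lemma5p1 (k : nat) (T : finType) (E : {set {set T}}) :
  3 <= k -> is_khypergraph k E -> set_homogeneous E -> aut_2transitive E.
Proof.
move=> k_ge3 E_uniform E_homogeneous x y x' y' neq_xy neq_xy'.
have [g autg gxy] := aut_pairs_transitive k_ge3 E_uniform E_homogeneous neq_xy neq_xy'.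
have [s auts [sx' sy']] := aut_swap k_ge3 E_uniform E_homogeneous neq_xy'.
case: (perm_imset_set2 neq_xy gxy) => -[gx gy].
  by exists g; split=> //; apply/is_autP.
by exists (g * s)%g; rewrite !permM gx gy; split=> //; apply/is_autP; rewrite groupM.
Qed.
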